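(* For every integer $n>0$, the rook equivalence graph $G(B)$ of the Ferrers board $B=(0,1,2,\ldots,n-1,n-1)$ (with $n+1$ columns of heights $0,1,\ldots,n-1$ followed by $n-1$) is isomorphic to the complete graph $K_n$.
   Context: A Ferrers board is given by a weakly increasing sequence of non-negative integers $B=(b_1,\ldots,b_n)$ of column heights; it is the set of unit cells in the first quadrant lying in column $i$ and rows $1,\ldots,b_i$. Prepending columns of height $0$ on the left does not change the board, and boards are compared using the same number of columns by such padding. A placement of $k$ rooks on $B$ is a set of $k$ cells of $B$ no two in the same row or column; $r_k(B)$ is the number of such placements. Two boards are rook equivalent if they have equal $r_k$ for all $k\ge 0$. The rook equivalence graph $G(B)$ has as vertices all Ferrers boards rook equivalent to $B$, and $\{B_1,B_2\}$ is an edge iff, written with the same number of columns, $B_1$ and $B_2$ differ in exactly two columns $i$ and $j$, where $B_1$ has $k$ more cells than $B_2$ in column $i$ and $k$ fewer cells than $B_2$ in column $j$, for some $k>0$. *)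

From mathcomp Require Import all_boot.
Set Implicit Arguments. Unset Strict Implicit. Unset Printing Implicit Defensive.

Definition ferrers (b : seq nat) : bool := sorted leq b.

(* Boards are considered up to prepending zero-height columns; we represent
   each board canonically by the (unique) padding-free representative:
   a weakly increasing sequence of positive heights. *)
Definition normalized (b : seq nat) : bool := ferrers b && all (fun x => 0 < x) b.

(* Cells of b: column i (0-based) and row j (0-based, i.e. row j+1) with j < b_i. *)
Definition cells (b : seq nat) : {set 'I_(size b) * 'I_(foldr maxn 0 b)} :=
  [set c : 'I_(size b) * 'I_(foldr maxn 0 b) | (c.2 : nat) < nth 0 b c.1].

Definition nonattacking (m h : nat) (S : {set 'I_m * 'I_h}) : bool :=
  [forall c1 in S, forall c2 in S,
     (c1 != c2) ==> ((c1.1 != c2.1) && (c1.2 != c2.2))].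

Definition rook_number (b : seq nat) (k : nat) : nat :=
  #|[set S in powerset (cells b) | nonattacking S && (#|S| == k)]|.

Definition rook_equiv (b1 b2 : seq nat) : Prop :=
  forall k, rook_number b1 k = rook_number b2 k.

Definition pad (m : nat) (b : seq nat) : seq nat := nseq (m - size b) 0 ++ b.

Definition rook_adj (b1 b2 : seq nat) : Prop :=
  exists m, [/\ size b1 <= m, size b2 <= m &
    exists i j k, [/\ i < m, j < m, i != j & 0 < k] /\
      nth 0 (pad m b1) i = nth 0 (pad m b2) i + k /\
      nth 0 (pad m b2) j = nth 0 (pad m b1) j + k /\
      (forall l, l < m -> l != i -> l != j ->
        nth 0 (pad m b1) l = nth 0 (pad m b2) l)].

Definition staircase_board (n : nat) : seq nat := iota 0 n ++ [:: n.-1].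

From mathcomp Require Import all_boot ssralg ssrnum ssrint ring zify.
Set Implicit Arguments. Unset Strict Implicit. Unset Printing Implicit Defensive.
Import GRing.Theory Num.Theory.

(* Adding a tallest column c to b gives
   r_(k+1)(b c) = r_(k+1)(b) + (c - k) r_k(b), and induction on the columns
   yields the Goldman-Joichi-White factorization
     sum_k r_k(b) (x)_(K-k) = prod_(i<K) (x - (i - b_i))
   with (x)_j the falling factorial.  As the (x)_j form a basis, two boards are
   rook equivalent iff these products coincide.  For B = (0,1,...,n-1,n-1) the
   product is x^n (x - 1).  A normalized board with the same product has at
   most n+1 columns (otherwise its root -b_0 < 0 would be a root of
   x^n (x - 1)); each of its n+1 roots i - b_i is then 0 or 1, and evaluating
   at x = 2 shows that exactly one of them, at some column q >= 1, is 1.  So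
   the vertices of G(B) are the n boards with padded heights i - [i = q],
   1 <= q <= n, and any two of them differ by moving one cell between
   columns q and q'. *)

Lemma card_subsets_imset (T T' : finType) (f : T -> T') (A : {set T})
    (p : pred {set T'}) : injective f ->
  #|[set S' : {set T'} | (S' \subset f @: A) && p S']| =
  #|[set S : {set T} | (S \subset A) && p (f @: S)]|.
Proof.
move=> f_inj; rewrite -(card_imset _ (imset_inj f_inj)); apply: eq_card => S'.
rewrite inE; apply/andP/imsetP => [[sub pS']|[S]]; last first.
  by rewrite inE => /andP [sub pS] ->; rewrite imsetS.
have fK : f @: (f @^-1: S') = S'.
  apply/setP => y; apply/imsetP/idP => [[x + ->]|yS']; first by rewrite inE.
  by have /imsetP [x _ eq_y] := subsetP sub y yS'; exists x => //; rewrite inE -eq_y.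
exists (f @^-1: S'); rewrite // inE fK pS' andbT; apply/subsetP => x; rewrite inE.
by move=> /(subsetP sub) /imsetP [y yA /f_inj ->].
Qed.

Section Grid.
Variables m h : nat.
Implicit Types (b : seq nat) (S : {set 'I_m * 'I_h}).

Definition grid_cells b : {set 'I_m * 'I_h} :=
  [set x : 'I_m * 'I_h | (x.2 : nat) < nth 0 b x.1].

Definition placements b (k : nat) : {set {set 'I_m * 'I_h}} :=
  [set S : {set 'I_m * 'I_h} | [&& S \subset grid_cells b, nonattacking S & #|S| == k]].

Lemma nonattackingP S :
  reflect (forall x y, x \in S -> y \in S -> x != y -> x.1 != y.1 /\ x.2 != y.2)
          (nonattacking S).
Proof.
apply: (iffP forall_inP) => [na x y xS yS xy | na x xS].
  by move/forall_inP/(_ y yS)/implyP/(_ xy)/andP: (na x xS).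
by apply/forall_inP => y yS; apply/implyP => xy; apply/andP; apply: na.
Qed.

Lemma nonattackingS S1 S2 : S1 \subset S2 -> nonattacking S2 -> nonattacking S1.
Proof.
move=> /subsetP sub /nonattackingP na; apply/nonattackingP => x y xS yS.
exact: na (sub x xS) (sub y yS).
Qed.

Lemma nonattacking_card_cols S : nonattacking S -> #|[set x.1 | x in S]| = #|S|.
Proof.
move=> /nonattackingP na; apply: card_in_imset => x y xS yS eq_xy.
by case: (eqVneq x y) => // /(na x y xS yS) []; rewrite eq_xy eqxx.
Qed.

Lemma nonattacking_card_rows S : nonattacking S -> #|[set x.2 | x in S]| = #|S|.
Proof.
move=> /nonattackingP na; apply: card_in_imset => x y xS yS eq_xy.
by case: (eqVneq x y) => // /(na x y xS yS) []; rewrite eq_xy eqxx.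
Qed.

Lemma placements_eq0 b k : (m < k) || (h < k) -> placements b k = set0.
Proof.
move=> lt_k; apply/setP => S; rewrite !inE; apply/negP => /and3P [_ na /eqP cardS].
have := max_card [set x.1 | x in S]; have := max_card [set x.2 | x in S].
rewrite nonattacking_card_cols // nonattacking_card_rows // !card_ord cardS.
by move=> ? ?; case/orP: lt_k; lia.
Qed.
End Grid.

Section Widen.
Variables (m h m' h' : nat) (b : seq nat).
Hypotheses (le_m : m <= m') (le_h : h <= h').
Hypotheses (size_b : size b <= m) (b_le_h : forall i, nth 0 b i <= h).

Definition widen_cell (x : 'I_m * 'I_h) : 'I_m' * 'I_h' :=
  (widen_ord le_m x.1, widen_ord le_h x.2).

Lemma widen_cell_inj : injective widen_cell.
Proof. by move=> [i j] [i' j'] [/val_inj -> /val_inj ->]. Qed.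

Lemma grid_cells_widen : grid_cells m' h' b = widen_cell @: grid_cells m h b.
Proof.
apply/setP => -[i j]; rewrite inE /=; apply/idP/imsetP => [lt_j|[[i0 j0]]]; last first.
  by rewrite inE => + [-> ->].
have lt_i : i < m.
  by apply: leq_trans size_b; rewrite ltnNge; apply: contraL lt_j => /(nth_default 0) ->.
have lt_jh : j < h by apply: leq_trans lt_j (b_le_h _).
by exists (Ordinal lt_i, Ordinal lt_jh); rewrite ?inE //; congr pair; apply: val_inj.
Qed.

Lemma nonattacking_widen (S : {set 'I_m * 'I_h}) :
  nonattacking (widen_cell @: S) = nonattacking S.
Proof.
have eq_widen n n' (le_n : n <= n') (u v : 'I_n) :
  (widen_ord le_n u == widen_ord le_n v) = (u == v) by [].
apply/nonattackingP/nonattackingP => na x y xS yS xy.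
  have := na _ _ (imset_f widen_cell xS) (imset_f widen_cell yS).
  by rewrite !eq_widen (inj_eq widen_cell_inj); apply.
move: xS yS xy => /imsetP [x0 x0S ->] /imsetP [y0 y0S ->].
by rewrite (inj_eq widen_cell_inj) => /(na _ _ x0S y0S); rewrite !eq_widen.
Qed.

Lemma card_placements_widen k : #|placements m' h' b k| = #|placements m h b k|.
Proof.
rewrite /placements grid_cells_widen.
rewrite (card_subsets_imset _ (fun S => nonattacking S && (#|S| == k)) widen_cell_inj).
by apply: eq_card => S; rewrite !inE nonattacking_widen card_imset //; apply: widen_cell_inj.
Qed.
End Widen.

Lemma nth_leq_foldr_maxn b i : nth 0 b i <= foldr maxn 0 b.
Proof.
elim: b i => [|x b IH] [|i] //=; first exact: leq_maxl.
exact: leq_trans (IH i) (leq_maxr _ _).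
Qed.

Lemma foldr_maxn_leq b h : (forall i, nth 0 b i <= h) -> foldr maxn 0 b <= h.
Proof.
elim: b => //= x b IH b_le_h; rewrite geq_max (b_le_h 0) IH // => i.
exact: b_le_h i.+1.
Qed.

Lemma rook_number_grid m h b k : size b <= m -> (forall i, nth 0 b i <= h) ->
  rook_number b k = #|placements m h b k|.
Proof.
move=> size_b /foldr_maxn_leq max_le_h.
rewrite (card_placements_widen size_b max_le_h (leqnn _) (@nth_leq_foldr_maxn b)).
by apply: eq_card => S; rewrite !inE.
Qed.

Lemma rook_number0 b : rook_number b 0 = 1.
Proof.
rewrite -(cards1 (set0 : {set 'I_(size b) * 'I_(foldr maxn 0 b)})).
apply: eq_card => S; rewrite !inE cards_eq0.
case: eqP => [->|]; last by rewrite !andbF.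
by rewrite sub0set andbT; apply/forall_inP => x; rewrite inE.
Qed.

Lemma rook_number_gt_size b k : size b < k -> rook_number b k = 0.
Proof.
move=> lt_k; rewrite (rook_number_grid _ (leqnn _) (@nth_leq_foldr_maxn b)).
by rewrite placements_eq0 ?lt_k ?cards0.
Qed.

Lemma rook_number_gt_height b c k : (forall i, nth 0 b i <= c) -> c < k ->
  rook_number b k = 0.
Proof.
move=> b_le_c lt_k; rewrite (rook_number_grid _ (leqnn _) b_le_c).
by rewrite placements_eq0 ?lt_k ?orbT ?cards0.
Qed.

(* Both b and rcons b c live in the grid with size b + 1 columns and c rows,
   where the new column is the whole last column. *)
Section AddColumn.
Variables (b : seq nat) (c : nat).
Local Notation m := (size b).+1.
Local Notation cell := ('I_m * 'I_c)%type.

Lemma grid_cells_rcons (x : cell) :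
  (x \in grid_cells m c (rcons b c)) = (x \in grid_cells m c b) || (x.1 == ord_max).
Proof.
case: x => i j; rewrite !inE /= nth_rcons.
have [lt_i|ge_i] := ltnP i (size b).
  by rewrite -val_eqE /= (ltn_eqF lt_i) orbF.
have eq_i : i = ord_max by apply/val_inj/eqP; rewrite /= eqn_leq ge_i -ltnS ltn_ord.
by rewrite eq_i /= !eqxx ltn_ord orbT.
Qed.

Lemma grid_cells_not_last (x : cell) : x \in grid_cells m c b -> x.1 != ord_max.
Proof. by rewrite inE; apply: contraTneq => ->; rewrite nth_default. Qed.

Definition hits_last_col (S : {set cell}) := [exists x in S, x.1 == ord_max].

Lemma placements_rcons_avoid k :
  [set S in placements m c (rcons b c) k | ~~ hits_last_col S] = placements m c b k.
Proof.
apply/setP => S; rewrite !inE andbC; case: (boolP (hits_last_col S)) => /= [hit|avoid].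
  apply/esym/negP => /and3P [/subsetP sub _ _].
  by case/existsP: hit => x /andP [/sub /grid_cells_not_last /negPf ->].
congr andb; apply/subsetP/subsetP => sub x xS; have := sub x xS.
  rewrite grid_cells_rcons => /orP [//|x_last].
  by case/negP: avoid; apply/existsP; exists x; rewrite xS.
by rewrite grid_cells_rcons => ->.
Qed.

Definition rook_extensions k := [set p : {set cell} * 'I_c |
  (p.1 \in placements m c b k) && (p.2 \notin [set x.2 | x in p.1])].

Definition add_rook (p : {set cell} * 'I_c) : {set cell} := (ord_max, p.2) |: p.1.

Lemma add_rook_placement k p :
  p \in rook_extensions k -> add_rook p \in placements m c (rcons b c) k.+1.
Proof.
case: p => S r; rewrite !inE /= => /andP [/and3P [sub na /eqP <-] free_r].
have r_notin : (ord_max, r) \notin S.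
  by apply/negP => /(subsetP sub) /grid_cells_not_last /eqP.
rewrite cardsU1 r_notin eqxx andbT; apply/andP; split.
  apply/subsetP => x /setU1P [->|/(subsetP sub) x_cell]; rewrite grid_cells_rcons.
    by rewrite eqxx orbT.
  by rewrite x_cell.
apply/nonattackingP => x y.
have new_free z : z \in S -> z.1 != ord_max /\ z.2 != r.
  move=> zS; split; first exact: grid_cells_not_last (subsetP sub z zS).
  by apply: contraNneq free_r => <-; apply: imset_f.
move=> /setU1P [->|xS] /setU1P [->|yS] //; rewrite ?eqxx //.
- by move=> _; have [] := new_free y yS; split; rewrite eq_sym.
- by move=> _; exact: new_free.
- exact: (nonattackingP _ na).
Qed.

Lemma add_rook_inj k : {in rook_extensions k &, injective add_rook}.
Proof.
have add_rookK p : p \in rook_extensions k -> [set x in add_rook p | x.1 != ord_max] = p.1.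
  rewrite !inE => /andP [/and3P [sub _ _] _]; apply/setP => x; rewrite !inE.
  case: (eqVneq x (ord_max, p.2)) => [->|_] /=; last first.
    by case: (boolP (x \in p.1)) => // /(subsetP sub) /grid_cells_not_last.
  by rewrite eqxx; apply/esym/negP => /(subsetP sub) /grid_cells_not_last /eqP.
move=> [S r] [S' r'] ext ext' eq_add.
have := add_rookK _ ext; rewrite eq_add add_rookK //= => eq_S; subst S'; congr pair.
have /setU1P [[]//|r_in] : (ord_max, r) \in add_rook (S, r') by rewrite -eq_add setU11.
by move: ext; rewrite !inE => /andP [/and3P [/subsetP/(_ _ r_in)/grid_cells_not_last/eqP]].
Qed.

Lemma placements_rcons_hit k :
  [set S in placements m c (rcons b c) k.+1 | hits_last_col S] = add_rook @: rook_extensions k.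
Proof.
apply/setP => S; rewrite inE; apply/andP/imsetP => [[]|[p ext ->]]; last first.
  split; first exact: add_rook_placement.
  by apply/existsP; exists (ord_max, p.2); rewrite setU11 eqxx.
rewrite inE => /and3P [sub na /eqP card_S] /existsP [x /andP [xS /eqP x_last]].
have others y : y \in S :\ x -> y.1 != ord_max /\ y.2 != x.2.
  by rewrite !inE => /andP [yx yS]; rewrite -x_last; apply: (nonattackingP _ na).
exists (S :\ x, x.2); last by rewrite /add_rook /= -x_last -surjective_pairing setD1K.
rewrite !inE /=; apply/andP; split; last first.
  by apply/imsetP => -[y /others [_ /negP ne] eq_r]; apply: ne; rewrite eq_r.
apply/and3P; split.
- apply/subsetP => y y_in; have [y_col _] := others y y_in.
  move: y_in; rewrite in_setD1 => /andP [_ /(subsetP sub)].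
  by rewrite grid_cells_rcons (negPf y_col) orbF.
- exact: nonattackingS (subsetDl _ _) na.
- by move: (cardsD1 x S); rewrite xS card_S add1n => -[->].
Qed.

Lemma card_extensions k : #|rook_extensions k| = (c - k) * #|placements m c b k|.
Proof.
transitivity (\sum_(S in placements m c b k) \sum_(r | r \notin [set x.2 | x in S]) 1).
  by rewrite pair_big_dep /= sum1_card; apply: eq_card => p; rewrite inE.
rewrite mulnC -sum_nat_const; apply: eq_bigr => S; rewrite inE => /and3P [_ na /eqP card_S].
have := cardsC [set x.2 | x in S].
rewrite sum1dep_card card_ord nonattacking_card_rows // card_S => /(congr1 (subn^~ k)).
by rewrite addKn; apply.
Qed.

Lemma card_placements_rcons k : #|placements m c (rcons b c) k.+1| =
  #|placements m c b k.+1| + (c - k) * #|placements m c b k|.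
Proof.
rewrite -(cardsID [set S | hits_last_col S]) addnC -card_extensions.
rewrite -setIdE -placements_rcons_avoid; congr (_ + _).
  by apply: eq_card => S; rewrite !inE andbC.
by rewrite placements_rcons_hit card_in_imset //; apply: add_rook_inj.
Qed.
End AddColumn.

Lemma sorted_rcons_leq b c : sorted leq (rcons b c) -> forall i, nth 0 b i <= c.
Proof.
rewrite -rev_sorted rev_rcons /= => /(order_path_min (rev_trans leq_trans)).
rewrite all_rev => /all_nthP b_le_c i.
by case: (ltnP i (size b)) => [/b_le_c //|/(nth_default 0) ->].
Qed.

Lemma rook_number_rcons b c k : sorted leq (rcons b c) ->
  rook_number (rcons b c) k.+1 = rook_number b k.+1 + (c - k) * rook_number b k.
Proof.
move=> /sorted_rcons_leq b_le_c.
have bc_le_c i : nth 0 (rcons b c) i <= c.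
  by rewrite nth_rcons; case: ltnP => // _; case: eqP.
have size_bc : size (rcons b c) <= (size b).+1 by rewrite size_rcons.
rewrite (rook_number_grid _ size_bc bc_le_c) !(rook_number_grid _ (leqnSn _) b_le_c).
exact: card_placements_rcons.
Qed.

Section RookPolynomial.
Local Open Scope ring_scope.


Definition falling (x : int) (j : nat) : int := \prod_(i < j) (x - i%:Z).

Definition board_root (p : seq nat) (i : nat) : int := i%:Z - (nth 0%N p i)%:Z.

Definition board_prod (p : seq nat) (x : int) : int :=
  \prod_(i < size p) (x - board_root p i).

Definition rook_sum (b : seq nat) (K : nat) (x : int) : int :=
  \sum_(k < K.+1) (rook_number b k)%:Z * falling x (K - k).

Lemma fallingS x j : falling x j.+1 = falling x j * (x - j%:Z).
Proof. by rewrite /falling big_ord_recr. Qed.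

Lemma falling_nat_eq0 (t j : nat) : (t < j)%N -> falling t%:Z j = 0.
Proof. by move=> lt_tj; rewrite /falling (bigD1 (Ordinal lt_tj)) //= subrr mul0r. Qed.

Lemma falling_nat_neq0 (t : nat) : falling t%:Z t != 0.
Proof. by apply/prodf_neq0 => i _; rewrite subr_eq0 eqz_nat neq_ltn ltn_ord orbT. Qed.

Lemma falling_basis_eq0 K (e : nat -> int) :
  (forall t : nat, \sum_(j < K.+1) e j * falling t%:Z j = 0) ->
  forall j, (j <= K)%N -> e j = 0.
Proof.
move=> sum_eq0; elim/ltn_ind => j IH le_jK.
have := sum_eq0 j; rewrite (bigD1 (Ordinal (le_jK : j < K.+1)%N)) //= big1 ?addr0.
  by move/eqP; rewrite mulf_eq0 (negPf (falling_nat_neq0 j)) orbF => /eqP.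
move=> i /eqP ne_ij; have [lt_ij|lt_ji|eq_ij] := ltngtP i j.
- by rewrite IH ?mul0r // -ltnS ltn_ord.
- by rewrite falling_nat_eq0 ?mulr0.
- by case: ne_ij; apply: val_inj.
Qed.

Lemma rook_number_rconsz b c k : sorted leq (rcons b c) ->
  (rook_number (rcons b c) k.+1)%:Z =
  (rook_number b k.+1)%:Z + (c%:Z - k%:Z) * (rook_number b k)%:Z.
Proof.
move=> sorted_bc; rewrite rook_number_rcons // PoszD PoszM.
have [le_kc|lt_ck] := leqP k c; first by rewrite subzn.
by rewrite (rook_number_gt_height (sorted_rcons_leq sorted_bc) lt_ck) !mulr0.
Qed.

Lemma rook_sum_rcons b c K x : sorted leq (rcons b c) -> (size b <= K)%N ->
  rook_sum (rcons b c) K.+1 x = rook_sum b K x * (x - (K%:Z - c%:Z)).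
Proof.
move=> sorted_bc le_bK; rewrite /rook_sum big_ord_recl rook_number0 mul1r subn0.
have lower_rooks : \sum_(k < K.+1) (rook_number b k)%:Z * falling x (K - k).+1 =
    falling x K.+1 + \sum_(k < K.+1) (rook_number b k.+1)%:Z * falling x (K - k).
  rewrite big_ord_recl big_ord_recr /= rook_number0 rook_number_gt_size ?ltnS //.
  rewrite mul1r mul0r addr0 subn0; congr (_ + _); apply: eq_bigr => k _.
  by rewrite /bump leq0n add1n subnS prednK // subn_gt0.
under eq_bigr => k _ do rewrite lift0 subSS rook_number_rconsz // mulrDl.
rewrite big_split /= addrA -lower_rooks mulr_suml -big_split /=.
apply: eq_bigr => k _; have le_kK : (k <= K)%N by rewrite -ltnS.
by rewrite fallingS -(subzn le_kK); ring.
Qed.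

Lemma size_pad K b : (size b <= K)%N -> size (pad K b) = K.
Proof. by move=> le_bK; rewrite size_cat size_nseq subnK. Qed.

Lemma pad_rcons K b c : (size b <= K)%N -> pad K.+1 (rcons b c) = rcons (pad K b) c.
Proof. by move=> le_bK; rewrite /pad size_rcons subSS rcons_cat. Qed.

Lemma board_prod_rcons p c x :
  board_prod (rcons p c) x = board_prod p x * (x - board_root (rcons p c) (size p)).
Proof.
rewrite /board_prod size_rcons big_ord_recr /=; congr (_ * _).
by apply: eq_bigr => i _; rewrite /board_root nth_rcons ltn_ord.
Qed.

Lemma rook_sum_factorization b K x : sorted leq b -> (size b <= K)%N ->
  rook_sum b K x = board_prod (pad K b) x.
Proof.
elim/last_ind: b K => [|b c IH] K sorted_b le_bK.
  rewrite /rook_sum big_ord_recl big1 => [|k _]; last first.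
    by rewrite rook_number_gt_size ?mul0r.
  rewrite rook_number0 mul1r subn0 addr0 /board_prod /pad subn0 cats0 size_nseq.
  by apply: eq_bigr => i _; rewrite /board_root nth_nseq if_same subr0.
case: K le_bK => [|K]; rewrite size_rcons // ltnS => le_bK.
have sorted_b0 := subseq_sorted leq_trans (subseq_rcons b c) sorted_b.
rewrite rook_sum_rcons // IH // pad_rcons // board_prod_rcons size_pad //.
by rewrite /board_root nth_rcons size_pad // ltnn eqxx.
Qed.

Lemma rook_equiv_board_prod b1 b2 K :
  sorted leq b1 -> sorted leq b2 -> (size b1 <= K)%N -> (size b2 <= K)%N ->
  rook_equiv b1 b2 <-> (forall x, board_prod (pad K b1) x = board_prod (pad K b2) x).
Proof.
move=> sorted1 sorted2 le1 le2; split => [eq_r x | eq_prod k].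
  by rewrite -!rook_sum_factorization //; apply: eq_bigr => k _; rewrite eq_r.
have [le_kK|lt_Kk] := leqP k K; last first.
  by rewrite !rook_number_gt_size ?(leq_trans _ lt_Kk).
pose d j := (rook_number b1 (K - j))%:Z - (rook_number b2 (K - j))%:Z.
suff /eqP : d (K - k)%N = 0 by rewrite subr_eq0 subKn // eqz_nat => /eqP.
apply: falling_basis_eq0 (leq_subr _ _) => t.
have := eq_prod t; rewrite -!rook_sum_factorization // => eq_sum.
transitivity (rook_sum b1 K t%:Z - rook_sum b2 K t%:Z); last by rewrite eq_sum subrr.
rewrite /rook_sum -sumrB (reindex_inj rev_ord_inj); apply: eq_bigr => j _.
have -> : (rev_ord j : nat) = (K - j)%N by rewrite /= subSS.
by rewrite /d subKn ?mulrBl // -ltnS.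
Qed.

End RookPolynomial.

Definition unpad (b : seq nat) : seq nat := [seq x <- b | 0 < x].

Lemma normalized_unpad b : sorted leq b -> normalized (unpad b).
Proof.
move=> sorted_b; rewrite /normalized /ferrers sorted_filter ?filter_all //.
exact: leq_trans.
Qed.

Lemma unpad_id b : normalized b -> unpad b = b.
Proof. by case/andP=> _ /all_filterP. Qed.

Lemma unpad_pad K b : unpad (pad K b) = unpad b.
Proof. by rewrite /unpad filter_cat filter_nseq. Qed.

Lemma pad_size b : pad (size b) b = b.
Proof. by rewrite /pad subnn. Qed.

Lemma pad_unpad b : sorted leq b -> pad (size b) (unpad b) = b.
Proof.
elim: b => // x b IH /= sorted_xb; have sorted_b := path_sorted sorted_xb.
have [->|x_gt0] := posnP x.
  by rewrite -[in RHS]IH // /pad subSn // size_filter count_size.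
have pos_b : all (fun y => 0 < y) b.
  apply/allP => y y_in; have /allP := order_path_min leq_trans sorted_xb.
  by move/(_ y y_in); apply: leq_trans.
by rewrite /unpad (all_filterP pos_b) (pad_size (x :: b)).
Qed.

Definition lowered_staircase (n q : nat) : seq nat :=
  [seq i - (i == q) | i <- iota 0 n.+1].

Lemma size_lowered_staircase n q : size (lowered_staircase n q) = n.+1.
Proof. by rewrite size_map size_iota. Qed.

Lemma nth_lowered_staircase n q i : i <= n ->
  nth 0 (lowered_staircase n q) i = i - (i == q).
Proof. by move=> le_in; rewrite (nth_map 0) ?nth_iota ?size_iota. Qed.

Lemma staircase_board_lowered n : staircase_board n = lowered_staircase n n.
Proof.
rewrite /lowered_staircase -addn1 iotaD map_cat /= eqxx subn1; congr (_ ++ _).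
rewrite -[LHS]map_id; apply/eq_in_map => i; rewrite mem_iota => /andP [_ lt_in].
by rewrite (ltn_eqF lt_in) subn0.
Qed.

Lemma sorted_lowered_staircase n q : sorted leq (lowered_staircase n q).
Proof.
apply: homo_sorted (iota_ltn_sorted 0 n.+1) => i j lt_ij.
by case: eqP; case: eqP; lia.
Qed.

Lemma size_staircase_board n : size (staircase_board n) = n.+1.
Proof. by rewrite size_cat size_iota addn1. Qed.

Lemma sorted_staircase_board n : sorted leq (staircase_board n).
Proof. by rewrite staircase_board_lowered sorted_lowered_staircase. Qed.

Lemma nth_staircase_leq n i : nth 0 (staircase_board n) i <= i.
Proof.
rewrite staircase_board_lowered; have [le_in|lt_ni] := leqP i n.
  by rewrite nth_lowered_staircase // leq_subr.
by rewrite nth_default // size_lowered_staircase.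
Qed.

Section BoardRoots.
Local Open Scope ring_scope.

Lemma board_prod_eq0P p x :
  reflect (exists2 i, (i < size p)%N & x = board_root p i) (board_prod p x == 0).
Proof.
apply: (iffP (prodf_eq0 _ _)) => [[i _]|[i lt_ip ->]].
  by rewrite subr_eq0 => /eqP ->; exists i.
by exists (Ordinal lt_ip); rewrite //= subrr.
Qed.

Lemma board_root_pad_ge0 K s i : (forall j, (nth 0 s j <= j)%N) ->
  0 <= board_root (pad K s) i.
Proof.
move=> s_le; rewrite /board_root subr_ge0 lez_nat nth_cat size_nseq nth_nseq.
by rewrite if_same; case: ifP => // _; apply: leq_trans (s_le _) (leq_subr _ _).
Qed.

Lemma board_root_lowered_staircase n q i : (0 < q)%N -> (i <= n)%N ->
  board_root (lowered_staircase n q) i = (i == q)%:Z.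
Proof.
move=> q_gt0 le_in; rewrite /board_root nth_lowered_staircase //.
case: eqP => [->|_]; last by rewrite subn0 subrr.
by rewrite subzn ?leq_subr // subKn.
Qed.

Lemma board_prod_lowered_staircase n q x : (0 < q <= n)%N ->
  board_prod (lowered_staircase n q) x = x ^+ n * (x - 1).
Proof.
case/andP=> q_gt0 le_qn; rewrite /board_prod size_lowered_staircase.
rewrite (bigD1 (Ordinal (le_qn : q < n.+1)%N)) // board_root_lowered_staircase //.
rewrite (eqxx q) (eq_bigr (fun=> x)) => [|i ne_iq].
  by rewrite prodr_const cardC1 card_ord mulrC.
have le_in : (i <= n)%N by rewrite -ltnS.
move: ne_iq; rewrite -val_eqE (board_root_lowered_staircase q_gt0 le_in) => /negPf ->.
by rewrite subr0.
Qed.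

Section StaircaseRoots.
Variables (n : nat) (p : seq nat).
Hypotheses (n_gt0 : (0 < n)%N) (size_p : size p = n.+1).
Hypothesis prod_p : forall x, board_prod p x = x ^+ n * (x - 1).

Lemma board_root_01 i :
  (i < size p)%N -> (board_root p i == 0) || (board_root p i == 1).
Proof.
move=> lt_ip; have : board_prod p (board_root p i) == 0.
  by apply/board_prod_eq0P; exists i.
by rewrite prod_p mulf_eq0 expf_eq0 n_gt0 andTb [_ - 1 == 0]subr_eq0.
Qed.

Lemma card_board_root_eq0 : #|[set i : 'I_(size p) | board_root p i == 0]| = n.
Proof.
have : board_prod p 2 = 2 ^+ n by rewrite prod_p; ring.
rewrite /board_prod (bigID (fun i : 'I_(size p) => board_root p i == 0)) /=.
rewrite (eq_bigr (fun=> 2)) => [|i /eqP ->]; last by rewrite subr0.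
rewrite [X in _ * X]big1 => [|i]; last first.
  by case/orP: (board_root_01 (ltn_ord i)) => /eqP -> //; rewrite eqxx.
rewrite prodr_const mulr1 => /(@ieexprIn int 2 isT isT) <-.
by apply: eq_card => i; rewrite inE.
Qed.

Lemma board_prod_staircase_inv :
  exists2 q, (0 < q <= n)%N & p = lowered_staircase n q.
Proof.
set Z := [set i : 'I_(size p) | board_root p i == 0].
have /cards1P [q Zq] : #|~: Z| == 1%N.
  by rewrite cardsCs setCK card_ord card_board_root_eq0 size_p subSnn.
have root_q (i : 'I_(size p)) : board_root p i = (i == q)%:Z.
  move/setP/(_ i): Zq; rewrite !inE -val_eqE.
  by case/orP: (board_root_01 (ltn_ord i)) => /eqP ->; rewrite ?eqxx ?oner_eq0 => <-.
have q_gt0 : (0 < q)%N.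
  rewrite lt0n; apply/negP => /eqP q0; have := root_q q.
  by rewrite eqxx /board_root q0; lia.
exists q; first by rewrite q_gt0 -ltnS -size_p ltn_ord.
apply: (@eq_from_nth _ 0) => [|i lt_i]; first by rewrite size_lowered_staircase.
rewrite nth_lowered_staircase; last by rewrite -ltnS -size_p.
have := root_q (Ordinal lt_i); rewrite /board_root.
change (i%:Z - (nth 0 p i)%:Z = (i == q)%:Z -> nth 0 p i = (i - (i == q))%N).
by case: eqP => _; lia.
Qed.
End StaircaseRoots.

Lemma pad_unpad_lowered_staircase n q :
  pad n.+1 (unpad (lowered_staircase n q)) = lowered_staircase n q.
Proof. by rewrite -{1}(size_lowered_staircase n q) pad_unpad ?sorted_lowered_staircase. Qed.

Lemma size_unpad_lowered_staircase n q :
  (size (unpad (lowered_staircase n q)) <= n.+1)%N.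
Proof. by rewrite size_filter -(size_lowered_staircase n q) count_size. Qed.

Lemma rook_equiv_lowered_staircase n q : (0 < q <= n)%N ->
  rook_equiv (unpad (lowered_staircase n q)) (staircase_board n).
Proof.
move=> q_range; rewrite staircase_board_lowered.
have sorted_unpad : sorted leq (unpad (lowered_staircase n q)).
  by apply: sorted_filter (sorted_lowered_staircase n q); apply: leq_trans.
apply/(rook_equiv_board_prod sorted_unpad (sorted_lowered_staircase n n)
        (size_unpad_lowered_staircase n q) (eq_leq (size_lowered_staircase n n))) => x.
rewrite pad_unpad_lowered_staircase -{1}(size_lowered_staircase n n) pad_size.
rewrite !board_prod_lowered_staircase // leqnn andbT.
by case/andP: q_range => /leq_trans; apply.
Qed.

Lemma rook_equiv_staircase_size n b : normalized b ->
  rook_equiv b (staircase_board n) -> (size b <= n.+1)%N.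
Proof.
case/andP=> sorted_b /allP pos_b eq_r; rewrite leqNgt; apply/negP => lt_nb.
have le_B : (size (staircase_board n) <= size b)%N by rewrite size_staircase_board ltnW.
have := (rook_equiv_board_prod sorted_b (sorted_staircase_board n) (leqnn _) le_B).1 eq_r.
rewrite pad_size => /(_ (board_root b 0)) eq_prod.
have b_gt0 : (0 < size b)%N := leq_trans (ltn0Sn n.+1) lt_nb.
have b0_gt0 : (0 < nth 0 b 0)%N by apply/pos_b/mem_nth.
have : board_prod (pad (size b) (staircase_board n)) (board_root b 0) == 0.
  by rewrite -eq_prod; apply/board_prod_eq0P; exists 0%N.
case/board_prod_eq0P => i _ eq_root.
have := board_root_pad_ge0 (size b) i (@nth_staircase_leq n).
by rewrite -eq_root /board_root; lia.
Qed.

Lemma rook_equiv_staircase_inv n b : (0 < n)%N -> normalized b ->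
  rook_equiv b (staircase_board n) ->
  exists2 q, (0 < q <= n)%N & b = unpad (lowered_staircase n q).
Proof.
move=> n_gt0 norm_b eq_r; have le_b := rook_equiv_staircase_size norm_b eq_r.
have [q q_range eq_pad] : exists2 q, (0 < q <= n)%N & pad n.+1 b = lowered_staircase n q.
  apply: (board_prod_staircase_inv n_gt0 (size_pad le_b)) => x.
  have [sorted_b _] := andP norm_b.
  have le_B := eq_leq (size_staircase_board n).
  rewrite ((rook_equiv_board_prod sorted_b (sorted_staircase_board n) le_b le_B).1 eq_r).
  rewrite -{1}(size_staircase_board n) pad_size staircase_board_lowered.
  by rewrite board_prod_lowered_staircase // n_gt0 leqnn.
by exists q; rewrite // -eq_pad unpad_pad unpad_id.
Qed.
End BoardRoots.

Lemma rook_adj_lowered_staircase n q1 q2 : 0 < q1 <= n -> 0 < q2 <= n -> q1 != q2 ->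
  rook_adj (unpad (lowered_staircase n q1)) (unpad (lowered_staircase n q2)).
Proof.
move=> /andP [q1_gt0 le_q1] /andP [q2_gt0 le_q2] ne_q.
exists n.+1; split; rewrite ?size_unpad_lowered_staircase //.
exists q2, q1, 1; rewrite !pad_unpad_lowered_staircase.
rewrite !(nth_lowered_staircase _ le_q1) !(nth_lowered_staircase _ le_q2) !eqxx.
have ne_q' : q2 != q1 by rewrite eq_sym.
rewrite (negPf ne_q) (negPf ne_q') !subn0 subnK // subnK //.
split; first by split; rewrite ?ltnS.
do 2!split=> //.
move=> l lt_l ne_l2 ne_l1; have le_l : l <= n by rewrite -ltnS.
by rewrite !(nth_lowered_staircase _ le_l) (negPf ne_l2) (negPf ne_l1).
Qed.

Lemma unpad_lowered_staircase_inj n q1 q2 : 0 < q1 -> q1 <= n -> q2 <= n ->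
  unpad (lowered_staircase n q1) = unpad (lowered_staircase n q2) -> q1 = q2.
Proof.
move=> q1_gt0 le_q1 le_q2 /(congr1 (pad n.+1)); rewrite !pad_unpad_lowered_staircase.
move=> /(congr1 (nth 0 ^~ q1)); rewrite !nth_lowered_staircase // eqxx.
by case: eqP => // _; lia.
Qed.

Theorem theorem11 (n : nat) : 0 < n ->
  exists vs : seq (seq nat),
    [/\ uniq vs, size vs = n, all normalized vs,
        (forall b, normalized b -> (b \in vs <-> rook_equiv b (staircase_board n))) &
        (forall b1 b2, b1 \in vs -> b2 \in vs -> b1 != b2 -> rook_adj b1 b2)].
Proof.
move=> n_gt0; exists [seq unpad (lowered_staircase n q) | q <- iota 1 n].
have in_range q : (q \in iota 1 n) = (0 < q <= n) by rewrite mem_iota add1n ltnS.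
split.
- rewrite map_inj_in_uniq ?iota_uniq // => q1 q2; rewrite !in_range.
  by case/andP=> q1_gt0 le_q1 /andP [_ le_q2]; apply: unpad_lowered_staircase_inj.
- by rewrite size_map size_iota.
- apply/allP => _ /mapP [q _ ->]; apply/normalized_unpad/sorted_lowered_staircase.
- move=> b norm_b; split => [/mapP [q] | eq_r].
    by rewrite in_range => q_range ->; apply: rook_equiv_lowered_staircase.
  have [q q_range ->] := rook_equiv_staircase_inv n_gt0 norm_b eq_r.
  by apply: map_f; rewrite in_range.
- move=> _ _ /mapP [q1 + ->] /mapP [q2 + ->]; rewrite !in_range => q1_range q2_range.
  by move=> ne_b; apply: rook_adj_lowered_staircase => //; apply: contraNneq ne_b => ->.
Qed.
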